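(* Let $k\ge 3$ and consider $k$ processes $P_0,\dots,P_{k-1}$ with inputs $v_0,\dots,v_{k-1}$ that are pairwise different, running the following algorithm on a single shared $\text{WRN}_{k}$ object: process $P_i$ performs $t\gets\texttt{WRN}(i,v_i)$ and then decides $t$ if $t\neq\bot$, and decides $v_i$ otherwise. Then in every execution at most $k-1$ distinct values are decided.
   Context: A $\text{WRN}_{k}$ (Write and Read Next) object is a deterministic atomic shared object with a single operation $\texttt{WRN}(i,v)$, where $i\in\{0,\dots,k-1\}$ and $v\neq\bot$. Its state consists of $k$ values $A[0],\dots,A[k-1]$, initially all $\bot$; the operation $\texttt{WRN}(i,v)$ atomically sets $A[i]\gets v$ and returns $A[(i+1)\bmod k]$. Executions are arbitrary asynchronous interleavings of the processes' atomic operations; processes may crash. *)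

From mathcomp Require Import all_boot.
Set Implicit Arguments. Unset Strict Implicit. Unset Printing Implicit Defensive.

Section WRN.
Variables (k : nat) (V : eqType).

(* State of a WRN_k object: A : 'I_k -> option V, with None standing for bot. *)
Definition wrn_state := 'I_k -> option V.

Definition wrn_init : wrn_state := fun _ => None.

(* WRN(i, x): sets A[i] := x, returns A[(i+1) mod k] (read before the write;
   for k >= 2 the two cells differ, so the order is irrelevant). *)
Definition wrn_write (A : wrn_state) (i : 'I_k) (x : V) : wrn_state :=
  fun j => if j == i then Some x else A j.
Definition wrn_read (A : wrn_state) (i : 'I_k) : option V := A (ordS i).

(* Run the atomic WRN operations of the processes in the linearization
   order s (process i invokes WRN(i, inp i)); returns, in order, each
   invoking process together with the response it got. *)
Fixpoint wrn_run (inp : 'I_k -> V) (A : wrn_state) (s : seq 'I_k)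
  : seq ('I_k * option V) :=
  match s with
  | [::] => [::]
  | i :: s' => (i, wrn_read A i) :: wrn_run inp (wrn_write A i (inp i)) s'
  end.

Definition decision (inp : 'I_k -> V) (p : 'I_k * option V) : V :=
  if p.2 is Some t then t else inp p.1.

(* Values decided in the execution where the processes that take their
   step do so in order s, and exactly the processes in D among them
   complete (decide); the others crash before deciding. Processes not in
   s crash before invoking WRN. *)
Definition decided_values (inp : 'I_k -> V) (s : seq 'I_k) (D : pred 'I_k)
  : seq V :=
  [seq decision inp p | p <- wrn_run inp wrn_init s & p.1 \in D].

End WRN.

(* Every process decides the input of a process that has already performed
   its WRN step, so it suffices to exhibit one process x whose input is never
   decided: the decided values then lie among the k - 1 inputs of the other
   processes.  If some process never takes a step, take x to be it.  Otherwise
   let l be the last process to step: its right neighbour has already written,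
   so l decides that neighbour's input, and every earlier process decides the
   input of a process scheduled before l; take x = l. *)
From mathcomp Require Import all_boot.
From mathcomp Require Import zify.

Set Implicit Arguments. Unset Strict Implicit. Unset Printing Implicit Defensive.

Lemma ordS_neq (k : nat) (i : 'I_k) : 1 < k -> ordS i != i.
Proof.
move=> k_gt1; apply/eqP => /(congr1 val) /=.
have := ltn_ord i; case: (ltnP i.+1 k) => [iS_lt _|iS_ge i_lt].
  by rewrite modn_small //; lia.
have -> : i.+1 = k by lia.
by rewrite modnn; lia.
Qed.

Section WRNRun.
Variables (k : nat) (V : eqType) (inp : 'I_k -> V).

Definition wrn_after (A : wrn_state k V) (s : seq 'I_k) : wrn_state k V :=
  foldl (fun A i => wrn_write A i (inp i)) A s.

Lemma wrn_run_rcons A s l :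
  wrn_run inp A (rcons s l) =
  rcons (wrn_run inp A s) (l, wrn_read (wrn_after A s) l).
Proof. by elim: s A => [|i s IH] A //=; rewrite IH. Qed.

Lemma wrn_afterE A s c :
  wrn_after A s c = if c \in s then Some (inp c) else A c.
Proof.
elim: s A => [|i s IH] A //=; rewrite IH in_cons /wrn_write.
by case: (c \in s); [rewrite orbT | case: eqP => [->|]].
Qed.

Lemma decision_after_init s l :
  decision inp (l, wrn_read (wrn_after (@wrn_init k V) s) l) =
  inp (if ordS l \in s then ordS l else l).
Proof. by rewrite /decision /wrn_read wrn_afterE; case: ifP. Qed.

Lemma run_decisions_sub s :
  {subset map (decision inp) (wrn_run inp (@wrn_init k V) s) <= map inp s}.
Proof.
elim/last_ind: s => [|s l IH] v //.
rewrite wrn_run_rcons !map_rcons !mem_rcons !in_cons => /orP[/eqP ->|/IH ->];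
  last by rewrite orbT.
rewrite decision_after_init; case: ifP => [Ss|_]; last by rewrite eqxx.
by rewrite map_f ?orbT.
Qed.

Lemma run_rcons_decisions_sub s l :
  ordS l \in s ->
  {subset map (decision inp) (wrn_run inp (@wrn_init k V) (rcons s l))
   <= map inp s}.
Proof.
move=> Ss v; rewrite wrn_run_rcons map_rcons mem_rcons in_cons.
case/orP=> [/eqP ->|/run_decisions_sub //].
by rewrite decision_after_init Ss map_f.
Qed.

Lemma decided_values_sub_run s D :
  {subset decided_values inp s D
   <= map (decision inp) (wrn_run inp (@wrn_init k V) s)}.
Proof.
by move=> v /mapP[p]; rewrite mem_filter => /andP[_ p_run] ->; apply: map_f.
Qed.

Lemma map_sub_enumC1 (x : 'I_k) (t : seq 'I_k) :
  x \notin t -> {subset map inp t <= map inp (enum (predC1 x))}.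
Proof.
move=> xNt v /mapP[c ct ->]; rewrite map_f // mem_enum /=.
by apply: contraNneq xNt => <-.
Qed.

Lemma decided_values_avoid s D :
  1 < k -> uniq s ->
  exists x, {subset decided_values inp s D <= map inp (enum (predC1 x))}.
Proof.
move=> k_gt1 s_uniq; have [x xNs|all_s] := pickP (fun x => x \notin s).
  exists x => v /decided_values_sub_run /run_decisions_sub.
  exact: map_sub_enumC1.
have in_s c : c \in s by apply/negbFE/all_s.
case/lastP: s s_uniq in_s {all_s} => [_ /(_ (Ordinal (ltnW k_gt1)))//|s l].
rewrite rcons_uniq => /andP[lNs _] in_s; exists l.
have Ss : ordS l \in s.
  by have := in_s (ordS l); rewrite mem_rcons in_cons (negbTE (ordS_neq l k_gt1)).
move=> v /decided_values_sub_run /(run_rcons_decisions_sub Ss).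
exact: map_sub_enumC1.
Qed.

End WRNRun.

Theorem corollary8 (k : nat) (V : eqType) (inp : 'I_k -> V) :
  3 <= k ->
  injective inp ->
  forall (s : seq 'I_k) (D : pred 'I_k),
    uniq s ->
    size (undup (decided_values inp s D)) <= k.-1.
Proof.
move=> k_ge3 _ s D s_uniq.
have [x avoid_x] := decided_values_avoid inp D (ltnW k_ge3) s_uniq.
rewrite -[k in k.-1](card_ord k) -(cardC1 x) cardE -(size_map inp).
apply: uniq_leq_size; first exact: undup_uniq.
by move=> v; rewrite mem_undup => /avoid_x.
Qed.
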